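(* Let $(n_k)_{k\ge0}$ be a strictly increasing sequence of positive integers with $n_0=1$ such that for every $\varepsilon>0$ there exists $\lambda\in\mathbb{T}\setminus\{1\}$ with $\sup_{k\ge0}|\lambda^{n_k}-1|\le\varepsilon$ and $|\lambda^{n_k}-1|\to0$ as $k\to\infty$. Then there exists a perfect compact subset $K$ of $\mathbb{T}$ such that the metric space $(K,d_{(n_k)})$ is separable and $|\lambda^{n_k}-1|\to0$ as $k\to\infty$ for every $\lambda\in K$.
   Context: $\mathbb{T}$ is the unit circle. For $\lambda,\mu\in\mathbb{T}$, $d_{(n_k)}(\lambda,\mu)=\sup_{k\ge0}|\lambda^{n_k}-\mu^{n_k}|$; this is a metric on $\mathbb{T}$ when $n_0=1$. *)

From Stdlib Require Import Reals List.
Open Scope R_scope.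

Definition Cx := (R * R)%type.
Definition Cone : Cx := (1, 0).
Definition Cmul (z w : Cx) : Cx :=
  (fst z * fst w - snd z * snd w, fst z * snd w + snd z * fst w).
Definition Csub (z w : Cx) : Cx := (fst z - fst w, snd z - snd w).
Fixpoint Cpow (z : Cx) (n : nat) : Cx :=
  match n with O => Cone | S m => Cmul z (Cpow z m) end.
Definition Cnorm (z : Cx) : R := sqrt (fst z * fst z + snd z * snd z).

Definition onT (z : Cx) : Prop := Cnorm z = 1.

Definition Copen (U : Cx -> Prop) : Prop :=
  forall z, U z -> exists e, 0 < e /\ forall w, Cnorm (Csub w z) < e -> U w.

Definition Ccompact (K : Cx -> Prop) : Prop :=
  forall (I : Type) (U : I -> Cx -> Prop),
    (forall i, Copen (U i)) ->
    (forall z, K z -> exists i, U i z) ->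
    exists l : list I, forall z, K z -> exists i, In i l /\ U i z.

Definition Cclosed (K : Cx -> Prop) : Prop := Copen (fun z => ~ K z).

Definition Cperfect (K : Cx -> Prop) : Prop :=
  (exists z, K z) /\ Cclosed K /\
  forall z, K z -> forall e, 0 < e ->
    exists w, K w /\ w <> z /\ Cnorm (Csub w z) < e.

(* d_{(n_k)}(lam, mu) <= e, i.e. sup_k |lam^{n_k} - mu^{n_k}| <= e *)
Definition d_le (n : nat -> nat) (lam mu : Cx) (e : R) : Prop :=
  forall k, Cnorm (Csub (Cpow lam (n k)) (Cpow mu (n k))) <= e.

Definition d_separable (n : nat -> nat) (K : Cx -> Prop) : Prop :=
  exists s : nat -> Cx, (forall m, K (s m)) /\
    forall z, K z -> forall e, 0 < e -> exists m, d_le n (s m) z e.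

Definition tends_to_one (n : nat -> nat) (lam : Cx) : Prop :=
  Un_cv (fun k => Cnorm (Csub (Cpow lam (n k)) Cone)) 0.

From Stdlib Require Import Reals Lra Lia List Bool Classical ClassicalEpsilon.
From Coquelicot Require Complex.
Open Scope R_scope.

(* Choose angles [th j >= 0] with [sum_j th j < oo] such that [lam_j = expi (th j)] satisfies
   [sup_k |lam_j^(n_k) - 1| <= eps_j] and [lam_j^(n_k) -> 1], for a summable sequence [eps].
   The points [expi (sum_j w_j th j)], [w] ranging over the binary sequences, form a continuous
   image of the Cantor space, hence a compact set.  Two sequences agreeing up to index [N] give
   points at [d_(n_k)]-distance at most [sum_(j > N) eps_j], uniformly in [k]: this yields
   separability (finitely supported [w] are dense), and flipping a single late digit yields
   perfectness.  Convergence [lam^(n_k) -> 1] for every point follows from the finitely many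
   leading angles plus the uniformly small tail. *)

(** * Chords and angles on the unit circle *)

Definition expi (x : R) : Cx := (cos x, sin x).

Definition chord (x : R) : R := 2 * Rabs (sin (x / 2)).

Lemma chord_ge0 x : 0 <= chord x.
Proof. unfold chord; pose proof (Rabs_pos (sin (x / 2))); lra. Qed.

Lemma chord0 : chord 0 = 0.
Proof. unfold chord; rewrite Rdiv_0_l, sin_0, Rabs_R0; ring. Qed.

Lemma chordN x : chord (- x) = chord x.
Proof. unfold chord; rewrite Rdiv_opp_l, sin_neg, Rabs_Ropp; reflexivity. Qed.

Lemma chord_abs x : chord (Rabs x) = chord x.
Proof.
  destruct (Rcase_abs x) as [Hx | Hx].
  - rewrite Rabs_left by exact Hx; apply chordN.
  - rewrite Rabs_right by exact Hx; reflexivity.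
Qed.

Lemma chordD x y : chord (x + y) <= chord x + chord y.
Proof.
  unfold chord; replace ((x + y) / 2) with (x / 2 + y / 2) by field; rewrite sin_plus.
  pose proof (Rabs_triang (sin (x / 2) * cos (y / 2)) (cos (x / 2) * sin (y / 2))) as H.
  rewrite !Rabs_mult in H.
  assert (Rabs (cos (x / 2)) <= 1) by (apply Rabs_le, COS_bound).
  assert (Rabs (cos (y / 2)) <= 1) by (apply Rabs_le, COS_bound).
  pose proof (Rabs_pos (sin (x / 2))); pose proof (Rabs_pos (sin (y / 2))).
  pose proof (Rabs_pos (cos (x / 2))); pose proof (Rabs_pos (cos (y / 2))).
  nra.
Qed.

Lemma Rabs_sin_le u : Rabs (sin u) <= Rabs u.
Proof.
  assert (Hpos : forall v, 0 < v -> Rabs (sin v) <= v).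
  { intros v Hv; pose proof (sin_lt_x v Hv); pose proof (SIN_bound v); pose proof PI2_1.
    apply Rabs_le; split; [|lra].
    destruct (Rle_or_lt 1 v); [lra|].
    assert (0 < sin v) by (apply sin_gt_0; lra); lra. }
  destruct (Rtotal_order u 0) as [Hu | [-> | Hu]].
  - rewrite <- Rabs_Ropp, <- sin_neg, (Rabs_left u) by exact Hu; apply Hpos; lra.
  - rewrite sin_0; lra.
  - rewrite (Rabs_right u) by lra; apply Hpos, Hu.
Qed.

Lemma chord_le_abs x : chord x <= Rabs x.
Proof.
  unfold chord; pose proof (Rabs_sin_le (x / 2)) as H.
  unfold Rdiv in H; rewrite Rabs_mult, (Rabs_right (/ 2)) in H by lra; lra.
Qed.

(* From the degree-7 Taylor lower bound [SIN]. *)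
Lemma sin_ge_third s : 0 <= s <= 2 -> s / 3 <= sin s.
Proof.
  intros Hs; pose proof PI2_3_2.
  destruct (SIN s) as [Hsin _]; [lra | lra |].
  unfold sin_lb, sin_approx, sin_term in Hsin; simpl in Hsin.
  assert (0 <= s * (4 - s * s)) by (apply Rmult_le_pos; nra).
  assert (0 <= s ^ 5 * (42 - s * s)) by (apply Rmult_le_pos; [apply pow_le|]; nra).
  assert (s - s ^ 3 / 6 + s ^ 5 / 120 - s ^ 7 / 5040 <= sin s)
    by (eapply Rle_trans; [|exact Hsin]; right; field).
  lra.
Qed.

Lemma expi0 : expi 0 = Cone.
Proof. unfold expi, Cone; rewrite cos_0, sin_0; reflexivity. Qed.

Lemma onT_expi x : onT (expi x).
Proof.
  unfold onT, Cnorm, expi; simpl; rewrite <- sqrt_1; f_equal.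
  pose proof (sin2_cos2 x); unfold Rsqr in *; lra.
Qed.

Lemma Cpow_expi x m : Cpow (expi x) m = expi (INR m * x).
Proof.
  induction m as [|m IHm]; simpl Cpow.
  - rewrite Rmult_0_l, expi0; reflexivity.
  - rewrite IHm, S_INR; unfold Cmul, expi; simpl.
    replace ((INR m + 1) * x) with (x + INR m * x) by ring.
    rewrite cos_plus, sin_plus; f_equal; ring.
Qed.

Lemma Cpow_one z : Cpow z 1 = z.
Proof. destruct z; unfold Cpow, Cmul, Cone; simpl; f_equal; ring. Qed.

Lemma Cpow_Cone m : Cpow Cone m = Cone.
Proof. rewrite <- expi0, Cpow_expi, Rmult_0_r; reflexivity. Qed.

Lemma Cnorm_sub_expi a b : Cnorm (Csub (expi a) (expi b)) = chord (a - b).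
Proof.
  unfold Cnorm, Csub, expi, chord; simpl.
  assert (Hc : cos (a - b) = 1 - 2 * sin ((a - b) / 2) * sin ((a - b) / 2)).
  { rewrite <- cos_2a_sin; f_equal; field. }
  rewrite cos_minus in Hc.
  pose proof (sin2_cos2 a); pose proof (sin2_cos2 b); unfold Rsqr in *.
  set (c := 2 * Rabs (sin ((a - b) / 2))).
  assert (Hc2 : c * c = 4 * (sin ((a - b) / 2) * sin ((a - b) / 2))).
  { unfold c; replace (2 * Rabs (sin ((a - b) / 2)) * (2 * Rabs (sin ((a - b) / 2))))
      with (4 * (Rabs (sin ((a - b) / 2)) * Rabs (sin ((a - b) / 2)))) by ring.
    rewrite <- Rabs_mult, Rabs_right by (apply Rle_ge, Rle_0_sqr); reflexivity. }
  rewrite <- (sqrt_square c) by (unfold c; pose proof (Rabs_pos (sin ((a - b) / 2))); lra).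
  f_equal; nra.
Qed.

Lemma Cnorm_sub_pow_expi x m : Cnorm (Csub (Cpow (expi x) m) Cone) = chord (INR m * x).
Proof. rewrite Cpow_expi, <- expi0, Cnorm_sub_expi, Rminus_0_r; reflexivity. Qed.

Lemma Cnorm_sub_eq0 a b : Cnorm (Csub a b) = 0 -> a = b.
Proof.
  destruct a as [a1 a2], b as [b1 b2]; unfold Cnorm, Csub; simpl; intros H.
  apply sqrt_eq_0, Rplus_sqr_eq_0 in H; [|apply Rplus_le_le_0_compat; apply Rle_0_sqr].
  destruct H; f_equal; lra.
Qed.

Lemma Cnorm_sub_gt0 a b : a <> b -> 0 < Cnorm (Csub a b).
Proof.
  intros Hab; destruct (Rle_lt_or_eq_dec _ _ (sqrt_pos _ : 0 <= Cnorm (Csub a b))) as [|Heq];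
    [assumption|].
  exfalso; apply Hab, Cnorm_sub_eq0; auto.
Qed.

Lemma Cnorm_Cmod z : Cnorm z = Complex.Cmod z.
Proof. unfold Cnorm, Complex.Cmod; f_equal; ring. Qed.

Lemma Cnorm_triangle a b c : Cnorm (Csub a c) <= Cnorm (Csub a b) + Cnorm (Csub b c).
Proof.
  rewrite !Cnorm_Cmod.
  replace (Csub a c) with (Complex.Cplus (Csub a b) (Csub b c))
    by (unfold Csub, Complex.Cplus; simpl; f_equal; ring).
  apply Complex.Cmod_triangle.
Qed.

Lemma Cnorm_sub_sym a b : Cnorm (Csub a b) = Cnorm (Csub b a).
Proof. unfold Cnorm, Csub; simpl; f_equal; ring. Qed.

(* [atan (b / a)] is an argument of [(a, b)] since [a > 0] near [1]; [|b| <= e] then bounds it. *)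
Lemma expi_near_one (l : Cx) e : onT l -> 0 < e <= / 2 -> Cnorm (Csub l Cone) <= e ->
  exists t, expi t = l /\ Rabs t <= 3 * e.
Proof.
  destruct l as [a b]; unfold onT, Cnorm, Csub, Cone; simpl; intros Hl He Hd.
  assert (Hab : a * a + b * b = 1).
  { rewrite <- (sqrt_sqrt (a * a + b * b)), Hl by nra; ring. }
  assert (Hd2 : (a - 1) * (a - 1) + (b - 0) * (b - 0) <= e * e).
  { rewrite <- (sqrt_sqrt ((a - 1) * (a - 1) + (b - 0) * (b - 0))) by nra.
    pose proof (sqrt_pos ((a - 1) * (a - 1) + (b - 0) * (b - 0))); nra. }
  assert (Ha : 7 / 8 <= a) by nra.
  assert (Hb : Rabs b <= e).
  { rewrite <- (Rabs_right e) by lra; apply Rsqr_le_abs_0; unfold Rsqr; nra. }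
  assert (Hs : sqrt (1 + (b / a)²) = / a).
  { apply sqrt_lem_1; [pose proof (Rle_0_sqr (b / a)); lra | left; apply Rinv_0_lt_compat; lra |].
    unfold Rsqr; field_simplify; try lra; rewrite <- Hab; field; lra. }
  set (t := atan (b / a)).
  assert (Hct : cos t = a) by (unfold t; rewrite cos_atan, Hs; field; lra).
  assert (Hst : sin t = b) by (unfold t; rewrite sin_atan, Hs; field; lra).
  exists t; split; [unfold expi; rewrite Hct, Hst; reflexivity|].
  pose proof (atan_bound (b / a)) as Hbound; fold t in Hbound; pose proof PI_4.
  destruct (Rle_or_lt 0 t).
  - pose proof (sin_ge_third t); pose proof (RRle_abs b).
    rewrite Rabs_right by lra; lra.
  - pose proof (sin_ge_third (- t)); rewrite sin_neg in *.
    pose proof (RRle_abs (- b)); rewrite Rabs_Ropp in *.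
    rewrite Rabs_left by lra; lra.
Qed.

Lemma chord_mul_limit_le x u l c N : Un_cv u l ->
  (forall M, (N <= M)%nat -> chord (x * u M) <= c) -> chord (x * l) <= c.
Proof.
  intros Hu Hc; apply le_epsilon; intros eta Heta.
  assert (Hx : 0 < Rabs x + 1) by (pose proof (Rabs_pos x); lra).
  destruct (Hu (eta / (Rabs x + 1))) as [M0 HM0]; [apply Rdiv_lt_0_compat; lra|].
  specialize (HM0 (N + M0)%nat ltac:(lia)); specialize (Hc (N + M0)%nat ltac:(lia)).
  unfold Rdist in HM0; rewrite Rabs_minus_sym in HM0.
  replace (x * l) with (x * u (N + M0)%nat + x * (l - u (N + M0)%nat)) by ring.
  eapply Rle_trans; [apply chordD|].
  eapply Rle_trans; [apply Rplus_le_compat_l, chord_le_abs|]; rewrite Rabs_mult.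
  assert (Rabs x * Rabs (l - u (N + M0)%nat) <= (Rabs x + 1) * (eta / (Rabs x + 1))).
  { apply Rmult_le_compat; try apply Rabs_pos; lra. }
  replace ((Rabs x + 1) * (eta / (Rabs x + 1))) with eta in * by (field; lra).
  lra.
Qed.

Lemma Un_cv_eventually_const u l d N : (forall M, (N <= M)%nat -> u M = d) ->
  Un_cv u l -> l = d.
Proof.
  intros Hd Hu; apply (UL_sequence u); [exact Hu|].
  intros e He; exists N; intros M HM; rewrite Hd by exact HM; unfold Rdist.
  rewrite Rminus_diag, Rabs_R0; exact He.
Qed.

Lemma sum_f_R0_zero_after f N : (forall j, (N < j)%nat -> f j = 0) ->
  forall M, (N <= M)%nat -> sum_f_R0 f M = sum_f_R0 f N.
Proof.
  intros Hf M HM; induction HM as [|M HM IH]; [reflexivity|].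
  rewrite tech5, IH, Hf by lia; ring.
Qed.

Lemma sum_f_R0_single f N : (forall j, j <> N -> f j = 0) ->
  forall M, (N <= M)%nat -> sum_f_R0 f M = f N.
Proof.
  intros Hf M HM; rewrite (sum_f_R0_zero_after f N); [|intros j Hj; apply Hf; lia | exact HM].
  destruct N as [|N]; [reflexivity|].
  rewrite tech5, sum_eq_R0; [ring|intros j Hj; apply Hf; lia].
Qed.

(** * Compactness of the Cantor space and its images *)

Definition agree (N : nat) (w w' : nat -> bool) : Prop := forall j, (j < N)%nat -> w j = w' j.

Definition upd (w : nat -> bool) (N : nat) (b : bool) (j : nat) : bool :=
  if Nat.eqb j N then b else w j.

Lemma agree_upd w w' N b : agree N w w' -> w' N = b -> agree (S N) (upd w N b) w'.
Proof.
  intros Hw Hb j Hj; unfold upd; destruct (Nat.eqb_spec j N) as [->|]; [auto|apply Hw; lia].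
Qed.

Lemma upd_other w N b j : j <> N -> upd w N b j = w j.
Proof. intros Hj; unfold upd; apply Nat.eqb_neq in Hj; rewrite Hj; reflexivity. Qed.

Fixpoint encode (w : nat -> bool) (N : nat) : nat :=
  match N with
  | O => O
  | S N => 2 * encode (fun j => w (S j)) N + Nat.b2n (w O)
  end.

Lemma agree_encode N w : agree N (Nat.testbit (encode w N)) w.
Proof.
  revert w; induction N as [|N IH]; intros w j Hj; [lia|]; cbn [encode].
  destruct j as [|j]; [apply Nat.testbit_0_r|].
  rewrite Nat.testbit_succ_r; apply (IH (fun j => w (S j))); lia.
Qed.

Section CantorCompact.

Variables (I : Type) (V : I -> (nat -> bool) -> Prop).
Hypothesis V_open : forall i w, V i w -> exists N, forall w', agree N w w' -> V i w'.
Hypothesis V_cover : forall w, exists i, V i w.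

Definition finitely_covered (s : nat -> bool) (N : nat) : Prop :=
  exists l : list I, forall w, agree N s w -> exists i, In i l /\ V i w.

Lemma finitely_covered_upd s N :
  finitely_covered (upd s N false) (S N) -> finitely_covered (upd s N true) (S N) ->
  finitely_covered s N.
Proof.
  intros [l1 H1] [l2 H2]; exists (l1 ++ l2); intros w Hw.
  destruct (w N) eqn:HwN;
    [destruct (H2 w) as [i [Hi HV]] | destruct (H1 w) as [i [Hi HV]]];
    try (apply agree_upd; auto); exists i; split; auto; apply in_or_app; auto.
Qed.

(* Descend the binary tree, always keeping a cylinder with no finite subcover. *)
Fixpoint bad_branch (N : nat) : nat -> bool :=
  match N with
  | O => fun _ => false
  | S N =>
      let s := bad_branch N in
      if excluded_middle_informative (finitely_covered (upd s N false) (S N))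
      then upd s N true else upd s N false
  end.

Lemma bad_branch_other N j : j <> N -> bad_branch (S N) j = bad_branch N j.
Proof.
  intros Hj; simpl; destruct (excluded_middle_informative _); apply upd_other, Hj.
Qed.

Lemma bad_branch_stable j N : (j < N)%nat -> bad_branch N j = bad_branch (S j) j.
Proof.
  induction 1 as [|N HN IH]; [reflexivity|].
  rewrite bad_branch_other by lia; exact IH.
Qed.

Lemma bad_branch_not_covered :
  ~ finitely_covered (fun _ => false) 0 -> forall N, ~ finitely_covered (bad_branch N) N.
Proof.
  intros H0 N; induction N as [|N IH]; [exact H0|]; simpl.
  destruct (excluded_middle_informative _) as [Hf | Hf]; [|exact Hf].
  intros Ht; apply IH, finitely_covered_upd; assumption.
Qed.

Lemma cantor_finite_subcover : exists l : list I, forall w, exists i, In i l /\ V i w.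
Proof.
  apply NNPP; intros Hno.
  assert (H0 : ~ finitely_covered (fun _ => false) 0).
  { intros [l Hl]; apply Hno; exists l; intros w; apply Hl; intros j Hj; lia. }
  set (limit := fun j => bad_branch (S j) j).
  destruct (V_cover limit) as [i Hi]; destruct (V_open i limit Hi) as [N HN].
  apply (bad_branch_not_covered H0 N); exists (i :: nil); intros w Hw.
  exists i; split; [left; reflexivity|]; apply HN; intros j Hj.
  rewrite <- Hw by exact Hj; unfold limit; symmetry; apply bad_branch_stable, Hj.
Qed.

End CantorCompact.

Lemma Ccompact_image_cantor (f : (nat -> bool) -> Cx) :
  (forall w e, 0 < e -> exists N, forall w', agree N w w' -> Cnorm (Csub (f w') (f w)) < e) ->
  Ccompact (fun z => exists w, z = f w).
Proof.
  intros Hf I U HU Hcov.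
  destruct (cantor_finite_subcover I (fun i w => U i (f w))) as [l Hl].
  - intros i w Hi; destruct (HU i (f w) Hi) as [e [He Hball]].
    destruct (Hf w e He) as [N HN]; exists N; intros w' Hw'; apply Hball, HN, Hw'.
  - intros w; apply Hcov; exists w; reflexivity.
  - exists l; intros z [w ->]; apply Hl.
Qed.

(* Cover [K] by the increasing family of complements of closed balls of radius [1/(m+1)] around [z]. *)
Lemma Ccompact_closed K : Ccompact K -> Cclosed K.
Proof.
  intros HK z Hz.
  set (U := fun (m : nat) x => / INR (S m) < Cnorm (Csub x z)).
  destruct (HK nat U) as [l Hl].
  - intros m x Hx; exists (Cnorm (Csub x z) - / INR (S m)); split; [unfold U in Hx; lra|].
    intros w Hw; unfold U in *; pose proof (Cnorm_triangle x w z) as Htri.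
    rewrite (Cnorm_sub_sym x w) in Htri; lra.
  - intros x Kx.
    assert (Hx : 0 < Cnorm (Csub x z)) by (apply Cnorm_sub_gt0; intros ->; contradiction).
    destruct (archimed_cor1 _ Hx) as [m [Hm Hm0]]; exists (pred m); unfold U.
    rewrite Nat.succ_pred_pos by exact Hm0; exact Hm.
  - set (M := S (list_max l)).
    exists (/ INR M); split; [apply Rinv_0_lt_compat, lt_0_INR; lia|].
    intros w Hw Kw; destruct (Hl w Kw) as [m [Hin Hm]]; unfold U in Hm.
    assert (Hle : (S m <= M)%nat).
    { unfold M; apply le_n_S; exact (proj1 (Forall_forall _ l) (proj1 (list_max_le l _) (le_n _)) m Hin). }
    assert (/ INR M <= / INR (S m)) by (apply Rinv_le_contravar; [apply lt_0_INR; lia | apply le_INR, Hle]).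
    lra.
Qed.

(** * The Cantor set of angle sums *)

Section CantorSet.

Variables (n : nat -> nat) (eps th : nat -> R) (EPS : R).
Hypothesis eps_sum : Un_cv (fun N => sum_f_R0 eps N) EPS.
Hypothesis th_ge0 : forall j, 0 <= th j.
Hypothesis th_le_eps : forall j, th j <= eps j.
Hypothesis chord_n_th_le : forall j k, chord (INR (n k) * th j) <= eps j.
Hypothesis chord_n_th_cv : forall j, Un_cv (fun k => chord (INR (n k) * th j)) 0.
Hypothesis chord_th_gt0 : forall j, 0 < chord (th j).
Hypothesis n_0 : n 0%nat = 1%nat.

Definition term (w : nat -> bool) (j : nat) : R := if w j then th j else 0.

Lemma term_bound w j : 0 <= term w j <= eps j.
Proof. unfold term; pose proof (th_ge0 j); pose proof (th_le_eps j); destruct (w j); lra. Qed.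

(* [expi (theta w)] is the product of the [expi (th j)] over the [j] with [w j = true]. *)
Definition theta (w : nat -> bool) : R :=
  proj1_sig (Rseries_CV_comp (term w) eps (term_bound w) (exist _ EPS eps_sum)).

Lemma theta_cv w : Un_cv (fun N => sum_f_R0 (term w) N) (theta w).
Proof. unfold theta; destruct (Rseries_CV_comp _ _ _ _); assumption. Qed.

Lemma eps_ge0 j : 0 <= eps j.
Proof. pose proof (th_ge0 j); pose proof (th_le_eps j); lra. Qed.

Lemma sum_eps_le N : sum_f_R0 eps N <= EPS.
Proof. apply growing_ineq; [intros M; rewrite tech5; pose proof (eps_ge0 (S M)); lra | exact eps_sum]. Qed.

Definition tail (N : nat) : R := EPS - sum_f_R0 eps N.

Lemma eps_le_tail N : eps (S N) <= tail N.
Proof. unfold tail; pose proof (sum_eps_le (S N)); rewrite tech5 in *; lra. Qed.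

Lemma tail_small e : 0 < e -> exists N, tail N < e.
Proof.
  intros He; destruct (eps_sum e He) as [N HN]; exists N.
  specialize (HN N (le_n N)); unfold Rdist in HN; apply Rabs_def2 in HN; unfold tail; lra.
Qed.

Lemma chord_mul_term_sub x w w' j :
  chord (x * (term w j - term w' j)) <= chord (x * th j).
Proof.
  pose proof (chord_ge0 (x * th j)).
  unfold term; destruct (w j), (w' j);
    rewrite ?Rminus_diag, ?Rmult_0_r, ?chord0, ?Rminus_0_r; try lra.
  rewrite Rminus_0_l, Ropp_mult_distr_r_reverse, chordN; lra.
Qed.

Section Estimates.

Variables (x : R) (w w' : nat -> bool) (N : nat).
Hypothesis chord_x_th_le : forall j, chord (x * th j) <= eps j.
Hypothesis w_w' : agree (S N) w w'.

Lemma chord_mul_partial_sub_le M : (N <= M)%nat ->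
  chord (x * (sum_f_R0 (term w) M - sum_f_R0 (term w') M)) <= sum_f_R0 eps M - sum_f_R0 eps N.
Proof.
  induction 1 as [|M HM IH].
  - rewrite (sum_eq (term w) (term w') N), Rminus_diag, Rmult_0_r, chord0; [lra|].
    intros j Hj; unfold term; rewrite w_w' by lia; reflexivity.
  - rewrite !tech5.
    replace (x * (sum_f_R0 (term w) M + term w (S M) - (sum_f_R0 (term w') M + term w' (S M))))
      with (x * (sum_f_R0 (term w) M - sum_f_R0 (term w') M) + x * (term w (S M) - term w' (S M)))
      by ring.
    eapply Rle_trans; [apply chordD|].
    pose proof (chord_mul_term_sub x w w' (S M)); pose proof (chord_x_th_le (S M)); lra.
Qed.

Lemma chord_mul_theta_sub_le : chord (x * (theta w - theta w')) <= tail N.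
Proof.
  apply (chord_mul_limit_le x _ _ _ N (CV_minus _ _ _ _ (theta_cv w) (theta_cv w'))).
  intros M HM; pose proof (chord_mul_partial_sub_le M HM); pose proof (sum_eps_le M).
  unfold tail; lra.
Qed.

End Estimates.

Lemma chord_th_le j : chord (th j) <= eps j.
Proof. rewrite <- (Rmult_1_l (th j)); pose proof (chord_n_th_le j 0) as H; rewrite n_0 in H; exact H. Qed.

Lemma Cnorm_sub_expi_theta_le w w' N : agree (S N) w w' ->
  Cnorm (Csub (expi (theta w)) (expi (theta w'))) <= tail N.
Proof.
  intros Hw; rewrite Cnorm_sub_expi, <- (Rmult_1_l (theta w - theta w')).
  apply chord_mul_theta_sub_le; [intros j; rewrite Rmult_1_l; apply chord_th_le | exact Hw].
Qed.

Definition cantor_set (z : Cx) : Prop := exists w, z = expi (theta w).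

Lemma cantor_set_compact : Ccompact cantor_set.
Proof.
  apply Ccompact_image_cantor; intros w e He.
  destruct (tail_small e He) as [N HN]; exists (S N); intros w' Hw'.
  eapply Rle_lt_trans; [apply Cnorm_sub_expi_theta_le|exact HN].
  intros j Hj; symmetry; apply Hw', Hj.
Qed.

(* Sequences with finitely many ones, enumerated through the binary digits of [m]. *)
Lemma cantor_set_separable : d_separable n cantor_set.
Proof.
  exists (fun m => expi (theta (Nat.testbit m))); split; [intros m; eexists; reflexivity|].
  intros z [w ->] e He; destruct (tail_small e He) as [N HN].
  exists (encode w (S N)); intros k.
  rewrite !Cpow_expi, Cnorm_sub_expi, <- Rmult_minus_distr_l.
  eapply Rle_trans; [|left; exact HN].
  apply chord_mul_theta_sub_le; [intros j; apply chord_n_th_le | apply agree_encode].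
Qed.

Definition truncate (w : nat -> bool) (N j : nat) : bool := w j && (j <=? N)%nat.

Lemma theta_truncate w N : theta (truncate w N) = sum_f_R0 (term w) N.
Proof.
  assert (Hlow : sum_f_R0 (term (truncate w N)) N = sum_f_R0 (term w) N).
  { apply sum_eq; intros j Hj; unfold term, truncate.
    rewrite (proj2 (Nat.leb_le j N) Hj), andb_true_r; reflexivity. }
  apply (Un_cv_eventually_const (fun M => sum_f_R0 (term (truncate w N)) M) _ _ N);
    [|apply theta_cv].
  intros M HM; rewrite <- Hlow; apply sum_f_R0_zero_after; [|exact HM].
  intros j Hj; unfold term, truncate; rewrite (proj2 (Nat.leb_gt j N) Hj), andb_false_r; reflexivity.
Qed.

Lemma chord_mul_partial_le x w N :
  chord (x * sum_f_R0 (term w) N) <= sum_f_R0 (fun j => chord (x * th j)) N.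
Proof.
  assert (Hterm : forall j, chord (x * term w j) <= chord (x * th j)).
  { intros j; unfold term; destruct (w j); [lra|].
    rewrite Rmult_0_r, chord0; apply chord_ge0. }
  induction N as [|N IH]; [apply Hterm|].
  rewrite !tech5, Rmult_plus_distr_l; eapply Rle_trans; [apply chordD|].
  pose proof (Hterm (S N)); lra.
Qed.

Lemma partial_chord_cv N : Un_cv (fun k => sum_f_R0 (fun j => chord (INR (n k) * th j)) N) 0.
Proof.
  induction N as [|N IH]; [apply chord_n_th_cv|].
  rewrite <- (Rplus_0_r 0); apply (CV_plus _ _ _ _ IH (chord_n_th_cv (S N))).
Qed.

Lemma tends_to_one_theta w : tends_to_one n (expi (theta w)).
Proof.
  intros e He.
  destruct (tail_small (e / 2)) as [N HN]; [lra|].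
  destruct (partial_chord_cv N (e / 2)) as [k0 Hk0]; [lra|].
  exists k0; intros k Hk; specialize (Hk0 k Hk); unfold Rdist in *.
  rewrite Rminus_0_r in *; rewrite Cnorm_sub_pow_expi, Rabs_right by (apply Rle_ge, chord_ge0).
  apply Rabs_def2 in Hk0; set (x := INR (n k)) in *.
  replace (x * theta w) with (x * theta (truncate w N) + x * (theta w - theta (truncate w N))) by ring.
  eapply Rle_lt_trans; [apply chordD|].
  assert (chord (x * (theta w - theta (truncate w N))) <= tail N).
  { apply chord_mul_theta_sub_le; [intros j; apply chord_n_th_le|].
    intros j Hj; unfold truncate; rewrite (proj2 (Nat.leb_le j N)), andb_true_r by lia; reflexivity. }
  rewrite theta_truncate in *; pose proof (chord_mul_partial_le x w N); lra.
Qed.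

Lemma theta_upd w N b : theta (upd w N b) - theta w = term (upd w N b) N - term w N.
Proof.
  apply (Un_cv_eventually_const
           (fun M => sum_f_R0 (term (upd w N b)) M - sum_f_R0 (term w) M) _ _ N);
    [|apply CV_minus; apply theta_cv].
  intros M HM; rewrite <- minus_sum.
  apply (sum_f_R0_single (fun j => term (upd w N b) j - term w j)); [|exact HM].
  intros j Hj; unfold term; rewrite upd_other by exact Hj; ring.
Qed.

(* Flipping the digit [S N] moves the point by exactly [chord (th (S N))], which is positive and
   at most [tail N]. *)
Lemma cantor_set_perfect : Cperfect cantor_set.
Proof.
  split; [|split].
  - exists (expi (theta (fun _ => false))); eexists; reflexivity.
  - apply Ccompact_closed, cantor_set_compact.
  - intros z [w ->] e He; destruct (tail_small e He) as [N HN].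
    set (w' := upd w (S N) (negb (w (S N)))).
    assert (Hd : Cnorm (Csub (expi (theta w')) (expi (theta w))) = chord (th (S N))).
    { unfold w'; rewrite Cnorm_sub_expi, theta_upd; unfold term, upd; rewrite Nat.eqb_refl.
      destruct (w (S N)); simpl; [rewrite Rminus_0_l, chordN|]; f_equal; ring. }
    exists (expi (theta w')); split; [eexists; reflexivity|split].
    + intros Heq; rewrite Heq in Hd; pose proof (chord_th_gt0 (S N)).
      rewrite Cnorm_sub_expi, Rminus_diag, chord0 in Hd; lra.
    + rewrite Hd; pose proof (chord_th_le (S N)); pose proof (eps_le_tail N); lra.
Qed.

Lemma cantor_set_spec : exists K : Cx -> Prop,
  (forall z, K z -> onT z) /\ Cperfect K /\ Ccompact K /\
  d_separable n K /\ (forall lam, K lam -> tends_to_one n lam).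
Proof.
  exists cantor_set; split; [|split; [|split; [|split]]].
  - intros z [w ->]; apply onT_expi.
  - apply cantor_set_perfect.
  - apply cantor_set_compact.
  - apply cantor_set_separable.
  - intros lam [w ->]; apply tends_to_one_theta.
Qed.

End CantorSet.

Lemma sum_inv_pow2 N : sum_f_R0 (fun j => / 2 ^ S j) N = 1 - / 2 ^ S N.
Proof.
  induction N as [|N IH]; [simpl; field|].
  rewrite tech5, IH; assert (0 < 2 ^ S N) by (apply pow_lt; lra).
  replace (2 ^ S (S N)) with (2 * 2 ^ S N) by reflexivity; field; lra.
Qed.

Lemma sum_inv_pow2_cv : Un_cv (fun N => sum_f_R0 (fun j => / 2 ^ S j) N) 1.
Proof.
  intros e He; destruct (cv_pow_half 1 e He) as [N HN]; exists N; intros m Hm.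
  specialize (HN (S m) ltac:(lia)); unfold Rdist in *; rewrite sum_inv_pow2.
  rewrite <- Rabs_Ropp; replace (- (1 - / 2 ^ S m - 1)) with (1 / 2 ^ S m - 0)
    by (field; apply pow_nonzero; lra).
  exact HN.
Qed.

(* Asking for a witness at scale [e / 3] absorbs the factor [3] of [expi_near_one]. *)
Lemma good_angle_exists (n : nat -> nat) e : n 0%nat = 1%nat -> 0 < e <= 3 / 2 ->
  (exists lam, onT lam /\ lam <> Cone /\ d_le n lam Cone (e / 3) /\ tends_to_one n lam) ->
  exists t, 0 <= t <= e /\ (forall k, chord (INR (n k) * t) <= e) /\
    Un_cv (fun k => chord (INR (n k) * t)) 0 /\ 0 < chord t.
Proof.
  intros Hn0 He [lam [Hlam [Hne [Hd Hcv]]]].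
  pose proof (Hd 0%nat) as Hd0; rewrite Hn0, Cpow_one, Cpow_Cone in Hd0.
  destruct (expi_near_one lam (e / 3) Hlam ltac:(lra) Hd0) as [t [<- Ht]].
  assert (Hchord : forall m, chord (INR m * Rabs t) = Cnorm (Csub (Cpow (expi t) m) Cone)).
  { intros m; rewrite Cnorm_sub_pow_expi, <- (chord_abs (INR m * t)), Rabs_mult.
    rewrite (Rabs_right (INR m)) by apply Rle_ge, pos_INR; reflexivity. }
  exists (Rabs t); split; [split; [apply Rabs_pos | lra]|split; [|split]].
  - intros k; rewrite Hchord; pose proof (Hd k) as Hk; rewrite Cpow_Cone in Hk; lra.
  - intros x Hx; destruct (Hcv x Hx) as [N HN]; exists N; intros k Hk.
    rewrite Hchord; apply HN, Hk.
  - rewrite <- (Rmult_1_l (Rabs t)); change 1 with (INR 1); rewrite Hchord, Cpow_one.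
    apply Cnorm_sub_gt0, Hne.
Qed.

Theorem lemma4p3 (n : nat -> nat) :
  (forall k, (0 < n k)%nat) ->
  (forall k, (n k < n (S k))%nat) ->
  n 0%nat = 1%nat ->
  (forall eps, 0 < eps ->
     exists lam, onT lam /\ lam <> Cone /\ d_le n lam Cone eps /\ tends_to_one n lam) ->
  exists K : Cx -> Prop,
    (forall z, K z -> onT z) /\ Cperfect K /\ Ccompact K /\
    d_separable n K /\ (forall lam, K lam -> tends_to_one n lam).
Proof.
  intros _ _ Hn0 Hwitness.
  set (eps := fun j : nat => / 2 ^ S j).
  assert (Heps : forall j, 0 < eps j <= 3 / 2).
  { intros j; unfold eps; pose proof (pow_R1_Rle 2 (S j) ltac:(lra)).
    split; [apply Rinv_0_lt_compat; lra|]. apply Rle_trans with 1; [|lra].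
    rewrite <- Rinv_1; apply Rinv_le_contravar; lra. }
  destruct (choice (fun j t => 0 <= t <= eps j /\ (forall k, chord (INR (n k) * t) <= eps j) /\
                      Un_cv (fun k => chord (INR (n k) * t)) 0 /\ 0 < chord t)) as [th Hth].
  { intros j; apply good_angle_exists; [exact Hn0 | apply Heps|].
    apply Hwitness; pose proof (Heps j); lra. }
  apply (cantor_set_spec n eps th 1 sum_inv_pow2_cv); [apply Hth .. | exact Hn0].
Qed.
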